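(* For all integers $n,m\ge0$, $$\sum_{k=0}^n\binom{n}{k}H_k(m)=\sum_{j=0}^m\binom{m}{j}\sum_{k=0}^nH_k(j)(-1)^{n-k}2^k\frac{(m-j)!}{(n-k)!}s(n-k,m-j).$$ In particular, $\sum_{k=0}^n\binom{n}{k}H_k=2^n\left(H_n-\sum_{k=1}^n\frac{1}{2^kk}\right)$.
   Context: For integers $m\ge 1$, $n\ge 0$, the multiple harmonic-like numbers are $H_n(m)=\sum_{1\le k_1+k_2+\cdots+k_m\le n}\frac{1}{k_1k_2\cdots k_m}$ (sum over positive integers $k_1,\dots,k_m$), with $H_n(0)=1$ for $n\ge 0$ and $H_0(m)=0$ for $m\ge1$. Equivalently, $\sum_{n\ge0}H_n(m)z^n=\frac{(-\ln(1-z))^m}{1-z}$. $H_n=H_n(1)=\sum_{k=1}^n\frac1k$. The (signed) Stirling numbers of the first kind $s(n,k)$ are defined by $\sum_{n\ge k}s(n,k)\frac{z^n}{n!}=\frac{\ln^k(1+z)}{k!}$, with $s(n,k)=0$ for $n<k$. *)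

From mathcomp Require Import all_boot all_order all_algebra.
Set Implicit Arguments. Unset Strict Implicit. Unset Printing Implicit Defensive.
Import Order.TTheory GRing.Theory Num.Theory.
Local Open Scope ring_scope.

(* Each k_i <= n, so we range over functions 'I_m -> 'I_n.+1.
   For m = 0 the empty tuple gives H_n(0) = 1; for m >= 1, H_0(m) = 0. *)
Definition Hm (n m : nat) : rat :=
  \sum_(t : {ffun 'I_m -> 'I_n.+1} |
        [forall i, 0 < (t i : nat)]%N && (\sum_(i < m) (t i : nat) <= n)%N)
     \prod_(i < m) ((t i : nat)%:R)^-1.

Definition harm (n : nat) : rat := \sum_(1 <= k < n.+1) (k%:R)^-1.

Fixpoint stir1 (n k : nat) {struct n} : int :=
  match n, k with
  | 0, 0 => 1
  | 0, _.+1 => 0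
  | _.+1, 0 => 0
  | n'.+1, k'.+1 => stir1 n' k' - (n'%:Z) * stir1 n' k'.+1
  end.

From mathcomp Require Import all_boot all_order all_algebra ring.
Import Order.TTheory GRing.Theory Num.Theory.
Local Open Scope ring_scope.

Set Implicit Arguments.
Unset Strict Implicit.

(* With [L = - ln (1 - x)] and [G = 1 / (1 - x)], [H_n(m)] is the coefficient of
   [x ^ n] in [L ^ m G], and the binomial transform of a sequence with generating
   function [A] has generating function [G A(x / (1 - x))].  Since
   [L(x / (1 - x)) = L(2 x) - L(x)] and [G G(x / (1 - x)) = G(2 x)], the binomial
   transform of [H_n(m)] is generated by [(L(2 x) - L(x)) ^ m G(2 x)]; expanding
   the power binomially and reading off the coefficients of [(- L) ^ (m - j)] as
   Stirling numbers gives the first identity.  Formal power series are handled as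
   polynomials truncated at degree [N], compared coefficientwise up to [N].  The
   second identity follows by induction on [n] from Pascal's rule and
   [\sum_k C(n, k) / (k + 1) = (2 ^ (n + 1) - 1) / (n + 1)]. *)

Section TruncatedEquality.
Variable R : nzRingType.

Definition eq_upto N (p q : {poly R}) := forall i, (i <= N)%N -> p`_i = q`_i.

Lemma eq_uptoM N p p' q q' :
  eq_upto N p p' -> eq_upto N q q' -> eq_upto N (p * q) (p' * q').
Proof.
move=> epp eqq i le_iN; rewrite !coefM; apply: eq_bigr => j _.
rewrite epp ?eqq //; first exact: leq_trans (leq_subr _ _) le_iN.
exact: leq_trans (ltnSE (ltn_ord j)) le_iN.
Qed.

Lemma eq_uptoX N p p' k : eq_upto N p p' -> eq_upto N (p ^+ k) (p' ^+ k).
Proof. by move=> epp; elim: k => [//|k IHk]; rewrite !exprS; apply: eq_uptoM. Qed.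

Lemma eq_upto_poly n N (E : nat -> R) : (n <= N)%N ->
  eq_upto n (\poly_(i < N.+1) E i) (\poly_(i < n.+1) E i).
Proof. by move=> le_nN i le_in; rewrite !coef_poly !ltnS le_in (leq_trans le_in). Qed.

End TruncatedEquality.

Lemma sum_bin_diag i j : (\sum_(k < j.+1) 'C(k + i, i) = 'C(j + i.+1, i.+1))%N.
Proof.
elim: j => [|j IHj]; first by rewrite big_ord1 !add0n !binn.
by rewrite big_ord_recr /= IHj addSn [(j.+1 + i.+1)%N]addSn binS addnS.
Qed.

Section TruncatedSeries.
Variable R : numFieldType.

(* Truncations at degree [N] of [1 / (1 - x)] and of [- ln (1 - x)]. *)
Definition geom N : {poly R} := \poly_(i < N.+1) 1.
Definition neglog N : {poly R} := \poly_(i < N.+1) i%:R^-1.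

Lemma comp_poly_poly n (E : nat -> R) (q : {poly R}) :
  (\poly_(i < n) E i) \Po q = \sum_(i < n) E i *: q ^+ i.
Proof.
rewrite poly_def raddf_sum /=; apply: eq_bigr => i _.
by rewrite comp_polyZ comp_Xn_poly.
Qed.

Lemma coef_comp_scale (c : R) p k : (p \Po (c%:P * 'X))`_k = c ^+ k * p`_k.
Proof.
rewrite comp_polyE.
under eq_bigr do rewrite exprMn -polyC_exp mul_polyC scalerA mulrC.
rewrite -(poly_def _ (fun i => c ^+ i * p`_i)) coef_poly; case: ltnP => // le_pk.
by rewrite nth_default ?mulr0.
Qed.

Lemma coef_geomX N i j : (j <= N)%N -> (geom N ^+ i.+1)`_j = 'C(j + i, i)%:R.
Proof.
elim: i j => [|i IHi] j le_jN; first by rewrite expr1 coef_poly ltnS le_jN addn0 bin0.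
rewrite exprS mulrC coefM -sum_bin_diag natr_sum; apply: eq_bigr => k _.
have le_kN : (k <= N)%N by exact: leq_trans (ltnSE (ltn_ord k)) le_jN.
by rewrite IHi // coef_poly ltnS (leq_trans (leq_subr _ _) le_jN) mulr1.
Qed.

Lemma coef_geom_XgeomX N i k : (k <= N)%N ->
  (geom N * ('X * geom N) ^+ i)`_k = 'C(k, i)%:R.
Proof.
move=> le_kN; rewrite exprMn mulrCA -exprS coefXnM.
case: ltnP => le_ik; first by rewrite bin_small.
by rewrite coef_geomX ?subnK // (leq_trans (leq_subr _ _) le_kN).
Qed.

Lemma coef_binomial_transform N (p : {poly R}) k : (k <= N)%N ->
  (geom N * (p \Po ('X * geom N)))`_k = \sum_(i < k.+1) 'C(k, i)%:R * p`_i.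
Proof.
move=> le_kN; rewrite -[p in p \Po _]coefK comp_poly_poly mulr_sumr coef_sum.
under eq_bigr do rewrite -scalerAr coefZ coef_geom_XgeomX // mulrC.
pose F i := 'C(k, i)%:R * p`_i.
rewrite (big_ord_widen _ F (leq_addr k.+1 (size p))) big_mkcond /=.
rewrite [RHS](big_ord_widen _ F (leq_addl (size p) k.+1)) [RHS]big_mkcond /=.
apply: eq_bigr => i _; rewrite /F.
case: (ltnP i (size p)) => le_si; case: (ltnP i k.+1) => le_ki //.
- by rewrite bin_small // mul0r.
- by rewrite nth_default ?mulr0.
Qed.

Lemma sumr_bin k : \sum_(i < k.+1) 'C(k, i)%:R = 2 ^+ k :> R.
Proof.
rewrite -[2]/(1 + 1 : R) exprDn; apply: eq_bigr => i _.
by rewrite !expr1n mul1r.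
Qed.

Lemma sum_bin_div k :
  \sum_(i < k.+1) 'C(k, i)%:R / i.+1%:R = (2 ^+ k.+1 - 1) / k.+1%:R :> R.
Proof.
have bin_div i : 'C(k, i)%:R / i.+1%:R = 'C(k.+1, i.+1)%:R / k.+1%:R :> R.
  apply/eqP; rewrite eqr_div ?pnatr_eq0 //; apply/eqP.
  by rewrite -!natrM mulnC mul_bin_diag mulnC.
under eq_bigr do rewrite bin_div.
by rewrite -mulr_suml -sumr_bin [in RHS]big_ord_recl bin0 addrC addKr.
Qed.

Lemma geom_comp_binomial N :
  eq_upto N (geom N * (geom N \Po ('X * geom N))) (geom N \Po (2%:P * 'X)).
Proof.
move=> k le_kN; rewrite coef_binomial_transform // coef_comp_scale.
rewrite coef_poly ltnS le_kN mulr1 -sumr_bin; apply: eq_bigr => i _.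
by rewrite coef_poly (leq_trans (ltn_ord i)) ?mulr1.
Qed.

Lemma coef_neglog_comp N k : (k <= N)%N ->
  (neglog N \Po ('X * geom N))`_k = (2 ^+ k - 1) / k%:R.
Proof.
move=> le_kN; rewrite comp_poly_poly coef_sum big_ord_recl /= invr0 scale0r coef0 add0r.
case: k le_kN => [|k] le_kN.
  rewrite subrr mul0r; apply: big1 => i _.
  by rewrite coefZ exprS -mulrA coefXM mulr0.
under eq_bigr do rewrite /bump add1n coefZ exprS -mulrA coefXM coef_geom_XgeomX 1?ltnW // mulrC.
pose F i := 'C(k, i)%:R / i.+1%:R : R.
rewrite -sum_bin_div (big_ord_widen _ F (leq_addr k.+1 N)) big_mkcond /=.
rewrite [RHS](big_ord_widen _ F (leq_addl N k.+1)) [RHS]big_mkcond /=.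
apply: eq_bigr => i _; rewrite /F.
case: (ltnP i N) => le_iN; case: (ltnP i k.+1) => le_ik //.
- by rewrite bin_small // mul0r.
- by rewrite ltnNge (leq_trans le_kN le_iN) in le_ik.
Qed.

Lemma neglog_comp_binomial N :
  eq_upto N (neglog N \Po ('X * geom N)) (neglog N \Po (2%:P * 'X) - neglog N).
Proof.
move=> k le_kN; rewrite coef_neglog_comp // coefB coef_comp_scale.
by rewrite coef_poly ltnS le_kN mulrBl mul1r.
Qed.

Lemma deriv_neglog N : (neglog N.+1)^`() = geom N.
Proof.
apply/polyP => i; rewrite coef_deriv !coef_poly !ltnS.
by case: ltnP => _; rewrite ?mul0rn // -[LHS]mulr_natr mulVf ?pnatr_eq0.
Qed.

Lemma mul1BX_geom N : (1 - 'X) * geom N = 1 - 'X^(N.+1).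
Proof.
elim: N => [|N IHN]; first by rewrite /geom poly_def big_ord1 scale1r mulr1.
have -> : geom N.+1 = geom N + 'X^(N.+1).
  apply/polyP => i; rewrite coefD coefXn !coef_poly !ltnS leq_eqVlt ltnS.
  by case: (eqVneq i N.+1) => [->|_]; rewrite ?eqxx ?ltnn ?addr0 ?add0r.
by rewrite mulrDr IHN mulrBl mul1r addrA subrK -exprS.
Qed.

Lemma coef_mul1BX_deriv (q : {poly R}) p :
  ((1 - 'X) * q^`())`_p = q`_p.+1 *+ p.+1 - q`_p *+ p.
Proof.
rewrite mulrBl mul1r coefB coefXM !coef_deriv.
by case: p => [|p] /=; rewrite ?mulr0n ?subr0.
Qed.

(* Differentiating [(- L) ^ (i + 1)], where [(1 - x) (- L)' = -1], yields the
   recurrence of the Stirling numbers. *)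
Lemma coef_lnX_rec N p i : (p <= N)%N ->
  ((- neglog N.+1) ^+ i.+1)`_p.+1 *+ p.+1 - ((- neglog N.+1) ^+ i.+1)`_p *+ p =
  - ((- neglog N.+1) ^+ i)`_p *+ i.+1.
Proof.
move=> le_pN; set L := - neglog N.+1.
have L'_eq : (1 - 'X) * L^`() = 'X^(N.+1) - 1.
  by rewrite derivN deriv_neglog mulrN mul1BX_geom opprB.
have : (1 - 'X) * (L ^+ i.+1)^`() = ('X^(N.+1) - 1) * L ^+ i *+ i.+1.
  by rewrite deriv_exp mulrnAr mulrA L'_eq.
move=> /(congr1 (coefp p)) /=; rewrite coef_mul1BX_deriv => ->.
by rewrite coefMn mulrBl mul1r coefB coefXnM ltnS le_pN sub0r.
Qed.

(* [ln (1 + z) ^ i / i! = \sum_p s(p, i) z ^ p / p!] at [z = - x]. *)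
Lemma coef_lnX N p i : (p <= N)%N ->
  ((- neglog N) ^+ i)`_p = i`!%:R / p`!%:R * (-1) ^+ p * (stir1 p i)%:~R.
Proof.
elim: p i N => [|p IHp] i N le_pN.
  rewrite -horner_coef0 horner_exp horner_coef0 coefN coef_poly invr0 oppr0 expr0n.
  by case: i => [|i] /=; rewrite ?divr1 ?mulr1 ?mulr0.
case: N le_pN => // N le_pN; case: i => [|i].
  by rewrite expr0 coefC /= mulr0.
have p1_neq0 : (p.+1%:R : R) != 0 by rewrite pnatr_eq0.
apply: (mulfI p1_neq0); rewrite [LHS]mulr_natl.
move/eqP: (@coef_lnX_rec N p i le_pN); rewrite subr_eq => /eqP ->.
rewrite !(IHp _ N.+1) ?(ltnW le_pN) //.
rewrite !factS !natrM exprS /= rmorphB rmorphM /= -[(p%:~R : R)]/(p%:R : R).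
have fact_p_neq0 : (p`!%:R : R) != 0 by rewrite pnatr_eq0 -lt0n fact_gt0.
by field; rewrite fact_p_neq0 nat1r.
Qed.

End TruncatedSeries.

Lemma Hm_coef_geom k m : Hm k m = (neglog rat k ^+ m * geom rat k)`_k.
Proof.
rewrite -[m in _ ^+ m]card_ord -prodr_const /neglog poly_def.
rewrite (bigA_distr_bigA (fun (i : 'I_m) (j : 'I_k.+1) => j%:R^-1 *: ('X^j : {poly rat}))).
rewrite mulr_suml coef_sum /Hm big_mkcond /=; apply: eq_bigr => t _.
rewrite scaler_prod prodrXr -scalerAl coefZ coefXnM.
case: ltnP => [_|le_sum_k]; first by rewrite mulr0 andbF.
rewrite coef_poly ltnS leq_subr mulr1 andbT.
case: (boolP [forall i, (0 < t i)%N]) => [//|].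
rewrite negb_forall => /existsP [i]; rewrite -eqn0Ngt => /eqP t_i0.
by rewrite (bigD1 i) //= t_i0 invr0 mul0r.
Qed.

Lemma Hm_coef N k m : (k <= N)%N -> Hm k m = (neglog rat N ^+ m * geom rat N)`_k.
Proof.
move=> le_kN; rewrite Hm_coef_geom; symmetry.
by apply: (eq_uptoM (eq_uptoX _ _) _ (leqnn k)); apply: eq_upto_poly.
Qed.

Lemma binomial_sum_Hm n m :
  \sum_(k < n.+1) 'C(n, k)%:R * Hm k m =
    \sum_(j < m.+1) 'C(m, j)%:R *
      \sum_(k < n.+1) Hm k j * (-1) ^+ (n - k) * 2 ^+ k
         * ((m - j)`!%:R / (n - k)`!%:R) * (stir1 (n - k) (m - j))%:~R.
Proof.
set L := neglog rat n; set G := geom rat n.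
have -> : \sum_(k < n.+1) 'C(n, k)%:R * Hm k m =
          (G * ((L ^+ m * G) \Po ('X * G)))`_n.
  rewrite coef_binomial_transform //; apply: eq_bigr => k _.
  by rewrite (Hm_coef m (ltnSE (ltn_ord k))) mulrC.
rewrite comp_polyM rmorphXn mulrCA.
rewrite (eq_uptoM (eq_uptoX m (@neglog_comp_binomial _ n)) (@geom_comp_binomial _ n) (leqnn n)).
rewrite addrC exprDn mulr_suml coef_sum; apply: eq_bigr => j _.
rewrite [in LHS]mulrnAl coefMn mulr_natl; congr (_ *+ _).
rewrite -mulrA mulrC coefM; apply: eq_bigr => k _.
have le_kn : (k <= n)%N by rewrite -ltnS.
rewrite -rmorphXn -comp_polyM coef_comp_scale -(Hm_coef _ le_kn).
by rewrite coef_lnX ?leq_subr //; ring.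
Qed.

Lemma harmS k : harm k.+1 = harm k + k.+1%:R^-1.
Proof. by rewrite /harm big_nat_recr. Qed.

Lemma harm0 : harm 0 = 0.
Proof. by rewrite /harm big_geq. Qed.

Lemma binomial_sum_harmS n :
  \sum_(k < n.+2) 'C(n.+1, k)%:R * harm k =
    2 * \sum_(k < n.+1) 'C(n, k)%:R * harm k + (2 ^+ n.+1 - 1) / n.+1%:R.
Proof.
set S := \sum_(k < n.+1) _.
have shifted : \sum_(k < n.+1) 'C(n, k.+1)%:R * harm k.+1 = S.
  rewrite big_ord_recr /= bin_small // mul0r addr0.
  by rewrite [RHS]big_ord_recl /= harm0 mulr0 add0r.
have harm_step : \sum_(k < n.+1) 'C(n, k)%:R * harm k.+1 = S + (2 ^+ n.+1 - 1) / n.+1%:R.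
  rewrite -sum_bin_div -big_split /=; apply: eq_bigr => k _.
  by rewrite harmS mulrDr.
rewrite big_ord_recl harm0 mulr0 add0r.
under eq_bigr do rewrite lift0 binS natrD mulrDl.
by rewrite big_split /= shifted harm_step; ring.
Qed.

Lemma binomial_sum_harm n : \sum_(k < n.+1) 'C(n, k)%:R * harm k =
    2 ^+ n * (harm n - \sum_(1 <= k < n.+1) ((2 ^+ k * k%:R) : rat)^-1).
Proof.
elim: n => [|n IHn]; first by rewrite big_ord1 harm0 mulr0 big_geq // subrr mulr0.
rewrite binomial_sum_harmS IHn harmS [in RHS]big_nat_recr //=.
have pow2_neq0 : (2 ^+ n : rat) != 0 by rewrite expf_neq0.
by rewrite !exprS; field; rewrite pow2_neq0 nat1r pnatr_eq0.
Qed.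

Theorem corollary3 : forall n m : nat,
  \sum_(k < n.+1) 'C(n, k)%:R * Hm k m =
    \sum_(j < m.+1) 'C(m, j)%:R *
      \sum_(k < n.+1) Hm k j * (-1) ^+ (n - k) * 2 ^+ k
         * ((m - j)`!%:R / (n - k)`!%:R) * (stir1 (n - k) (m - j))%:~R
  /\
  \sum_(k < n.+1) 'C(n, k)%:R * harm k =
    2 ^+ n * (harm n - \sum_(1 <= k < n.+1) ((2 ^+ k * k%:R) : rat)^-1).
Proof. by move=> n m; split; [exact: binomial_sum_Hm | exact: binomial_sum_harm]. Qed.
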